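(* Let $n\ge 3$ be an integer and $r=\lceil \binom{n}{3}/\lfloor n/3\rfloor\rceil$. If $g\ge r$ is a positive integer and there exists an orthogonal array $\mathrm{OA}(3,n+2,g)$, then there exists a $\mathrm{TOC}_q(n,4,3)$ with $q=g+1$.
   Context: $\mathcal{H}_q(n,w)$ is the set of all words of length $n$ over $\mathbb{Z}_q$ with exactly $w$ nonzero entries, with the Hamming distance. An $(n,d,w)_q$-code is a nonempty subset of $\mathcal{H}_q(n,w)$ in which any two distinct words have Hamming distance at least $d$; $A_q(n,d,w)$ is the maximum size of such a code and a code of this size is optimal. A $\mathrm{TOC}_q(n,d,w)$ is a partition of $\mathcal{H}_q(n,w)$ into mutually disjoint optimal $(n,d,w)_q$-codes. An orthogonal array $\mathrm{OA}(t,k,s)$ is an $s^t\times k$ array over an $s$-symbol alphabet such that in every choice of $t$ columns each ordered $t$-tuple of symbols appears in exactly one row. *)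

From mathcomp Require Import all_boot.
Set Implicit Arguments. Unset Strict Implicit. Unset Printing Implicit Defensive.

(* Words of length n over Z_q, represented as functions 'I_n -> 'I_q,
   the symbol 0 of Z_q being the ordinal with value 0. *)
Definition word (q n : nat) := {ffun 'I_n -> 'I_q}.

Definition hweight (q n : nat) (x : word q n) : nat :=
  #|[set i : 'I_n | nat_of_ord (x i) != 0]|.
Definition hdist (q n : nat) (x y : word q n) : nat :=
  #|[set i : 'I_n | x i != y i]|.

Definition Hspace (q n w : nat) : {set word q n} :=
  [set x : word q n | hweight x == w].

Definition is_code (q n d w : nat) (C : {set word q n}) : bool :=
  [&& C != set0, C \subset Hspace q n w &
      [forall x in C, forall y in C, (x != y) ==> (d <= hdist x y)]].

Definition Aq (q n d w : nat) : nat :=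
  \max_(C : {set word q n} | is_code d w C) #|C|.

Definition is_optimal_code (q n d w : nat) (C : {set word q n}) : bool :=
  is_code d w C && (#|C| == Aq q n d w).

Definition is_TOC (q n d w : nat) (P : {set {set word q n}}) : bool :=
  partition P (Hspace q n w) && [forall C in P, is_optimal_code d w C].

(* A choice of t columns is given as an injective map 'I_t -> 'I_k
   (covering all orders, which is equivalent). *)
Definition is_OA (t k s : nat) (A : {ffun 'I_(s ^ t) -> {ffun 'I_k -> 'I_s}}) : Prop :=
  forall (c : {ffun 'I_t -> 'I_k}), injective c ->
  forall (v : {ffun 'I_t -> 'I_s}),
    #|[set r : 'I_(s ^ t) | [forall j : 'I_t, A r (c j) == v j]]| = 1.

Definition exists_OA (t k s : nat) : Prop :=
  exists A : {ffun 'I_(s ^ t) -> {ffun 'I_k -> 'I_s}}, @is_OA t k s A.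

Definition ceil_div (a b : nat) : nat := (a + b - 1) %/ b.

From mathcomp Require Import all_boot zify.
Set Implicit Arguments. Unset Strict Implicit. Unset Printing Implicit Defensive.

(* Index blocks by the g^3 rows r of an OA(3,n,g) A: block r consists of the weight-3 words x whose entry at
   each support position p is 1 + ((A r p + sum of the support of x) mod g).
   Since any three columns of A determine the row, every weight-3 word lies in
   exactly one block; a block holds exactly one word per 3-subset of positions,
   i.e. C(n,3) words, the most a code of weight 3 and distance 4 can have.
   Two words of a block whose supports share two positions have support sums
   differing by l - l' with l <> l' < n <= g, so they also differ on the shared
   positions and are at distance 4.  The bound on g gives n <= g when n >= 4. *)

Definition supp q n (x : word q n) : {set 'I_n} := [set i | nat_of_ord (x i) != 0].

Lemma mem_Hspace q n w (x : word q n) : (x \in Hspace q n w) = (#|supp x| == w).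
Proof. by rewrite inE. Qed.

Section HammingSupport.
Variables (q n : nat) (x y : word q n).

Lemma diff_sub_suppU : [set i | x i != y i] \subset supp x :|: supp y.
Proof.
apply/subsetP => i; rewrite !inE; apply: contraR; rewrite negb_or !negbK.
by case/andP => /eqP x0 /eqP y0; apply/eqP/val_inj; rewrite /= x0 y0.
Qed.

Lemma suppD_sub_diff : supp x :\: supp y \subset [set i | x i != y i].
Proof.
apply/subsetP => i; rewrite !inE negbK => /andP[/eqP y0 x0].
by apply: contraNneq x0 => ->; rewrite y0.
Qed.

Lemma hdist_le_card_suppU : hdist x y <= #|supp x :|: supp y|.
Proof. exact/subset_leq_card/diff_sub_suppU. Qed.

Lemma suppU_sub_diff : {in supp x :&: supp y, forall i, x i != y i} ->
  supp x :|: supp y \subset [set i | x i != y i].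
Proof.
move=> neq_xy; apply/subsetP => i; rewrite !inE.
case: (boolP (_ != 0)) => x0; case: (boolP (_ != 0)) => y0 //= _.
- by apply: neq_xy; rewrite !inE x0.
- by apply: contra y0 => /eqP <-.
- by apply: contra x0 => /eqP ->.
Qed.

End HammingSupport.

Lemma card_suppD_le_hdist q n (x y : word q n) :
  #|supp x :\: supp y| + #|supp y :\: supp x| <= hdist x y.
Proof.
have disj : [disjoint supp x :\: supp y & supp y :\: supp x].
  by apply/pred0P => i /=; rewrite !inE; case: (_ != 0); case: (_ != 0).
rewrite -cardsUI (disjoint_setI0 disj) cards0 addn0.
apply/subset_leq_card; rewrite subUset suppD_sub_diff /=.
by apply: subset_trans (suppD_sub_diff y x) _; apply/subsetP => i; rewrite !inE eq_sym.
Qed.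

Lemma card_code_le_bin q n d w (C : {set word q n}) :
  w < d -> is_code d w C -> #|C| <= 'C(n, w).
Proof.
move=> lt_wd /and3P[_ /subsetP CH /forall_inP dC].
have supp_inj : {in C &, injective (@supp q n)}.
  move=> x y xC yC eq_supp; apply: contraTeq lt_wd => neq_xy.
  have /forall_inP/(_ y yC) := dC x xC; rewrite neq_xy /= => le_dh.
  rewrite -leqNgt (leq_trans le_dh) // (leq_trans (hdist_le_card_suppU x y)) //.
  by have := CH y yC; rewrite eq_supp setUid mem_Hspace => /eqP ->.
rewrite -(card_in_imset supp_inj).
have := card_draws 'I_n w; rewrite card_ord => <-.
apply/subset_leq_card/subsetP => _ /imsetP[x xC ->].
by rewrite inE -mem_Hspace CH.
Qed.

Lemma optimal_code_of_card q n d w (C : {set word q n}) :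
  w < d -> is_code d w C -> #|C| = 'C(n, w) -> is_optimal_code d w C.
Proof.
move=> lt_wd codeC cardC; rewrite /is_optimal_code codeC eqn_leq.
rewrite (leq_bigmax_cond _ codeC) cardC /=.
by apply/bigmax_leqP => D; apply: card_code_le_bin.
Qed.

Lemma TOC_of_blocks q n d w (I : finType) (B : I -> {set word q n}) :
  (forall i, is_optimal_code d w (B i)) ->
  (forall x, x \in Hspace q n w -> exists i, x \in B i) ->
  (forall i j x, x \in B i -> x \in B j -> i = j) ->
  is_TOC d w [set B i | i : I].
Proof.
move=> optB coverB uniqB.
have codeB i : is_code d w (B i) by case/andP: (optB i).
have disjB : {in predT &, forall i j, j != i -> [disjoint B i & B j]}.
  move=> i j _ _ neq_ji; apply/pred0P => x /=.
  by apply: contra_neqF neq_ji => /andP[xi xj]; apply: uniqB xj xi.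
have nonemptyB i : predT i -> B i != set0 by case/and3P: (codeB i).
have [partB _] := indexed_partition disjB nonemptyB.
rewrite /is_TOC; apply/andP; split; last first.
  by apply/forall_inP => _ /imsetP[i _ ->].
suff <- : cover [set B i | i : I] = Hspace q n w by [].
apply/setP => x; apply/bigcupP/idP => [[_ /imsetP[i _ ->]] | /coverB[i xi]].
  by case/and3P: (codeB i) => _ /subsetP sub _; apply: sub.
by exists (B i); first exact: imset_f.
Qed.

Lemma exists_OA_le t k k' s : k <= k' -> exists_OA t k' s -> exists_OA t k s.
Proof.
move=> le_kk' [A A_OA]; exists [ffun r => [ffun i => A r (widen_ord le_kk' i)]].
move=> c c_inj v.
have wc_inj : injective [ffun j => widen_ord le_kk' (c j)].
  by move=> i j; rewrite !ffunE => /(congr1 val) /= /val_inj; apply: c_inj.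
rewrite -(A_OA _ wc_inj v).
by apply: eq_card => r; rewrite !inE; apply: eq_forallb => j; rewrite !ffunE.
Qed.

Section OrthogonalArrayRows.
Variables (t k s : nat) (A : {ffun 'I_(s ^ t) -> {ffun 'I_k -> 'I_s}}).
Hypothesis A_OA : is_OA A.
Variables (T : {set 'I_k}) (card_T : #|T| = t).

Lemma card_OA_rows_on (v : 'I_k -> 'I_s) :
  #|[set r | [forall i in T, A r i == v i]]| = 1.
Proof.
pose c : {ffun 'I_t -> 'I_k} := [ffun j => enum_val (cast_ord (esym card_T) j)].
have c_inj : injective c.
  by move=> i j; rewrite !ffunE => /enum_val_inj/cast_ord_inj.
rewrite -(A_OA c_inj [ffun j => v (c j)]).
apply: eq_card => r; rewrite !inE; apply/forall_inP/forallP => [eq_rv j | eq_rv i iT].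
  by rewrite !ffunE; apply: eq_rv; apply: enum_valP.
have := eq_rv (cast_ord card_T (enum_rank_in iT i)).
by rewrite !ffunE cast_ordK enum_rankK_in.
Qed.

Lemma OA_row_exists (v : 'I_k -> 'I_s) : exists r, {in T, forall i, A r i = v i}.
Proof.
have /eqP/cards1P[r rows_v] := card_OA_rows_on v.
exists r => i iT; have : r \in [set r] by rewrite inE.
by rewrite -rows_v inE => /forall_inP/(_ i iT)/eqP.
Qed.

Lemma OA_row_unique r r' : {in T, forall i, A r i = A r' i} -> r = r'.
Proof.
move=> eq_rr'; have /eqP/cards1P[r0 rows_r] := card_OA_rows_on (A r').
suff row_r0 r1 : {in T, forall i, A r1 i = A r' i} -> r1 = r0.
  by rewrite (row_r0 r) // (row_r0 r').
move=> eq_r1; apply/set1P; rewrite -rows_r inE.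
by apply/forall_inP => i iT; rewrite eq_r1.
Qed.

End OrthogonalArrayRows.

Lemma modn_sum_swap_neq n g (S T : {set 'I_n}) : n <= g ->
  #|S :\: T| = 1 -> #|T :\: S| = 1 ->
  (\sum_(p in S) nat_of_ord p) %% g != (\sum_(p in T) nat_of_ord p) %% g.
Proof.
move=> le_ng /eqP/cards1P[l ST_l] /eqP/cards1P[l' TS_l'].
rewrite (big_setID T) (big_setID S (A := T)) /= [T :&: S]setIC eqn_modDl.
rewrite ST_l TS_l' !big_set1 !modn_small ?(leq_trans (ltn_ord _) le_ng) //.
have : l \in S :\: T by rewrite ST_l set11.
have : l' \in T :\: S by rewrite TS_l' set11.
rewrite !inE => /andP[_ l'T] /andP[lT _].
by apply: contraNneq lT => /val_inj ->.
Qed.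

Definition subm g a s := (a + (g - s %% g)) %% g.

Lemma subm_lt g a s : 0 < g -> subm g a s < g.
Proof. exact: ltn_pmod. Qed.

Lemma subm_addK g a s : 0 < g -> a < g -> (subm g a s + s) %% g = a.
Proof.
move=> g_gt0 lt_ag; have lt_sg := ltn_pmod s g_gt0.
rewrite /subm modnDml {2}(divn_eq s g).
have -> : a + (g - s %% g) + (s %/ g * g + s %% g) = (s %/ g).+1 * g + a by lia.
by rewrite modnMDl modn_small.
Qed.

Lemma leq_ceil_div_bin3 n : 4 <= n -> n <= ceil_div 'C(n, 3) (n %/ 3).
Proof.
move=> n_ge4; have n3_gt0 : 0 < n %/ 3 by rewrite divn_gt0 // ltnW.
rewrite /ceil_div leq_divRL //.
suff : n * (n %/ 3) <= 'C(n, 3) by lia.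
case: (ltnP n 5) => [lt_n5 | ge_n5]; first by have -> : n = 4 by lia.
have bin3 : 'C(n, 3) * 6 = n * (n.-1 * n.-2).
  by rewrite (bin_ffact n 3) !ffactnS ffactn0 muln1.
by have := leq_trunc_div n 3; nia.
Qed.

Section Construction.
Variables (g n : nat) (A : {ffun 'I_(g ^ 3) -> {ffun 'I_n -> 'I_g}}).
Hypotheses (g_gt0 : 0 < g) (A_OA : is_OA A) (n_ge3 : 3 <= n).
(* For n = 3 a block is a single word, so g is then unconstrained. *)
Hypothesis n_le_g : 4 <= n -> n <= g.

Definition supp_sum (x : word g.+1 n) : nat := \sum_(p in supp x) nat_of_ord p.

Definition block (r : 'I_(g ^ 3)) : {set word g.+1 n} :=
  [set x in Hspace g.+1 n 3 |
     [forall p in supp x, (x p).-1 == (A r p + supp_sum x) %% g]].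

Lemma block_supp r x : x \in block r -> #|supp x| = 3.
Proof. by rewrite inE mem_Hspace => /andP[/eqP]. Qed.

Lemma block_entry r x p : x \in block r -> p \in supp x ->
  nat_of_ord (x p) = ((A r p + supp_sum x) %% g).+1.
Proof.
rewrite inE => /andP[_ /forall_inP x_r] px.
by rewrite -(eqP (x_r p px)) prednK // lt0n; rewrite inE in px.
Qed.

Lemma block_supp_inj r : {in block r &, injective (@supp g.+1 n)}.
Proof.
move=> x y xr yr eq_supp; apply/ffunP => p; apply: ord_inj.
have eq_sum : supp_sum x = supp_sum y by rewrite /supp_sum eq_supp.
case: (boolP (p \in supp x)) => px.
  by rewrite (block_entry xr px) (block_entry yr) -?eq_supp // eq_sum.
have := px; rewrite eq_supp !inE !negbK => /eqP ->.
by move: px; rewrite inE negbK => /eqP ->.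
Qed.

Lemma block_supp_onto r (T : {set 'I_n}) :
  #|T| = 3 -> exists2 x, x \in block r & supp x = T.
Proof.
move=> card_T; pose s := \sum_(p in T) nat_of_ord p.
pose x : word g.+1 n :=
  [ffun p => if p \in T then inord ((A r p + s) %% g).+1 else ord0].
have supp_x : supp x = T.
  apply/setP => p; rewrite !inE ffunE; case: ifP => // _.
  by rewrite inordK // ltnS ltn_pmod.
exists x => //; rewrite inE mem_Hspace supp_x card_T eqxx /=.
apply/forall_inP => p pT.
by rewrite /supp_sum supp_x ffunE pT inordK //= ltnS ltn_pmod.
Qed.

Lemma card_block r : #|block r| = 'C(n, 3).
Proof.
rewrite -(card_in_imset (block_supp_inj (r := r))).
have := card_draws 'I_n 3; rewrite card_ord => <-.
apply: eq_card => T; rewrite inE; apply/imsetP/eqP => [[x xr ->] | ].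
  exact: block_supp xr.
by case/(block_supp_onto r) => x xr <-; exists x.
Qed.

Lemma block_row_exists x : x \in Hspace g.+1 n 3 -> exists r, x \in block r.
Proof.
rewrite mem_Hspace => /eqP card_x.
pose v p := Ordinal (subm_lt (x p).-1 (supp_sum x) g_gt0).
have [r A_rv] := OA_row_exists A_OA card_x v.
exists r; rewrite inE mem_Hspace card_x eqxx /=; apply/forall_inP => p px.
by rewrite A_rv // /v /= subm_addK //; case: (nat_of_ord (x p)) (ltn_ord (x p)).
Qed.

Lemma block_row_unique r r' x : x \in block r -> x \in block r' -> r = r'.
Proof.
move=> xr xr'; apply: (OA_row_unique A_OA (block_supp xr)) => p px.
apply: ord_inj; have := block_entry xr px; rewrite (block_entry xr' px) => -[].
by move/eqP; rewrite eqn_modDr !modn_small // => /eqP.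
Qed.

Lemma block_neq_common r x y : x \in block r -> y \in block r ->
  supp_sum x %% g != supp_sum y %% g ->
  {in supp x :&: supp y, forall p, x p != y p}.
Proof.
move=> xr yr neq_sum p; rewrite inE => /andP[px py].
apply: contra neq_sum => /eqP/(congr1 val).
by rewrite /= (block_entry xr px) (block_entry yr py) => -[] /eqP; rewrite eqn_modDl.
Qed.

Lemma hdist_block r x y : x \in block r -> y \in block r -> x != y ->
  4 <= hdist x y.
Proof.
move=> xr yr neq_xy; have card_x := block_supp xr; have card_y := block_supp yr.
have neq_supp : supp x != supp y.
  by apply: contra neq_xy => /eqP/(block_supp_inj xr yr)->.
set m := #|supp x :&: supp y|.
have cardD_x : #|supp x :\: supp y| = 3 - m by rewrite cardsD card_x.
have cardD_y : #|supp y :\: supp x| = 3 - m by rewrite cardsD setIC card_y.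
have [le_m1 | lt1m] := leqP m 1.
  by apply: leq_trans (card_suppD_le_hdist x y); rewrite cardD_x cardD_y; lia.
have m2 : m = 2.
  suff : m != 3 by have := subset_leq_card (subsetIl (supp x) (supp y)); lia.
  apply: contra neq_supp => /eqP m3.
  have /eqP/setIidPl sub_xy : supp x :&: supp y == supp x.
    by rewrite eqEcard subsetIl card_x -/m m3.
  by rewrite eqEcard sub_xy card_x card_y.
have card_U : #|supp x :|: supp y| = 4 by rewrite cardsU card_x card_y -/m m2.
have le_ng : n <= g.
  by apply: n_le_g; rewrite -card_U (leq_trans (max_card _)) ?card_ord.
have neq_sum : supp_sum x %% g != supp_sum y %% g.
  by apply: modn_sum_swap_neq; rewrite ?cardD_x ?cardD_y ?m2.
rewrite -card_U; apply: subset_leq_card; apply: suppU_sub_diff.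
exact: block_neq_common xr yr neq_sum.
Qed.

Lemma block_optimal r : is_optimal_code 4 3 (block r).
Proof.
apply: optimal_code_of_card (card_block r) => //; apply/and3P; split.
- by rewrite -card_gt0 card_block bin_gt0.
- by apply/subsetP => x /setIdP[].
- apply/forall_inP => x xr; apply/forall_inP => y yr; apply/implyP.
  exact: hdist_block xr yr.
Qed.

Lemma block_TOC : is_TOC 4 3 [set block r | r : 'I_(g ^ 3)].
Proof. exact: TOC_of_blocks block_optimal block_row_exists block_row_unique. Qed.

End Construction.

Theorem proposition4p7 (n g : nat) :
  3 <= n ->
  0 < g ->
  ceil_div 'C(n, 3) (n %/ 3) <= g ->
  exists_OA 3 (n + 2) g ->
  exists P : {set {set word (g + 1) n}}, is_TOC 4 3 P.
Proof.
move=> n_ge3 g_gt0 le_ceil_g /(exists_OA_le (leq_addr 2 n))[A A_OA].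
rewrite addn1; exists [set block A r | r : 'I_(g ^ 3)].
apply: block_TOC => // n_ge4.
exact: leq_trans (leq_ceil_div_bin3 n_ge4) le_ceil_g.
Qed.
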